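(* Let $N\ge1$ and $\Gamma_N=\{0,\dots,N-1\}^2\subset\mathbb{Z}^2$, and take $c^+=N-1$, $c^-=0$ so that $d^+_0$ and $d^-_0$ are the main diagonals of $\Gamma_N$. Then, with all functions restricted to $\Gamma_N$: (i) for $N=1$, $\{H^+_{\geq0}\}$ is a basis of $\mathcal{H}^{\Gamma_N}_\mathbb{Z}$; (ii) for $N$ even, $\{H^+_{\geq i},H^+_{\leq -i},H^-_{\geq i},H^-_{\leq -i}\}_{i=1,\dots,N-1}$ is a basis of $\mathcal{H}^{\Gamma_N}_\mathbb{Z}$; (iii) for $N\ge3$ odd, $\{H^+_{\geq0},H^+_{\leq-1},H^-_{\geq1},H^-_{\leq-1}\}\cup\{H^+_{\geq i},H^+_{\leq -i},H^-_{\geq i},H^-_{\leq -i}\}_{i=2,\dots,N-1}$ is a basis of $\mathcal{H}^{\Gamma_N}_\mathbb{Z}$.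
   Context: Adjacency $\sim$ is nearest-neighbor adjacency in $\mathbb{Z}^2$. For finite $\Gamma$, $(\Delta_\Gamma f)(v)=\sum_{w\in\Gamma,\,w\sim v}f(w)-4f(v)$, $\partial\Gamma$ is the set of vertices of $\Gamma$ with a neighbor outside $\Gamma$, and $\mathcal{H}^\Gamma_\mathbb{Z}$ is the module of $H:\Gamma\to\mathbb{Z}$ with $(\Delta_\Gamma H)(v)=0$ for all $v\in\Gamma\setminus\partial\Gamma$. A function $H:\mathbb{Z}^2\to\mathbb{Z}$ is harmonic on $\mathbb{Z}^2$ if $4H(v)=\sum_{w\sim v}H(w)$ for all $v$. Diagonals: $d^+_i=\{(x,y)\in\mathbb{Z}^2: x+y=i+c^+\}$, $d^-_i=\{(x,y): x-y=i+c^-\}$. $H^+_{\geq i}$ denotes any integer-valued harmonic function on $\mathbb{Z}^2$ that vanishes on $d^+_k$ for all $k<i$ and takes values in $\{+1,-1\}$ on $d^+_i$ (its values on each diagonal $d^+_k$, $k>i$, are determined by one freely chosen value on that diagonal, any choice allowed); $H^+_{\leq i}$ is defined likewise but vanishing on $d^+_k$ for all $k>i$; $H^-_{\geq i},H^-_{\leq i}$ likewise with $d^-$ in place of $d^+$. *)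

From HB Require Import structures.
From mathcomp Require Import all_boot all_order all_algebra.
Set Implicit Arguments. Unset Strict Implicit. Unset Printing Implicit Defensive.
Import Order.TTheory GRing.Theory Num.Theory.
Local Open Scope ring_scope.

Definition pt := (int * int)%type.

Definition nbrs (v : pt) : seq pt :=
  [:: (v.1 + 1, v.2); (v.1 - 1, v.2); (v.1, v.2 + 1); (v.1, v.2 - 1)].

Definition inGamma (N : nat) (v : pt) : bool :=
  (0 <= v.1 < N%:Z) && (0 <= v.2 < N%:Z).

Definition boundary (N : nat) (v : pt) : bool :=
  inGamma N v && has (fun w => ~~ inGamma N w) (nbrs v).

Definition lapGamma (N : nat) (f : pt -> int) (v : pt) : int :=
  \sum_(w <- nbrs v | inGamma N w) f w - 4 * f v.

(* membership in H^Gamma_Z (functions on Gamma_N, represented by functions on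
   Z^2 whose values outside Gamma_N are irrelevant) *)
Definition harmGammaZ (N : nat) (f : pt -> int) : Prop :=
  forall v, inGamma N v -> ~~ boundary N v -> lapGamma N f v = 0.

Definition harmZ2 (H : pt -> int) : Prop :=
  forall v, 4 * H v = \sum_(w <- nbrs v) H w.

Definition dplus (c : int) (i : int) (v : pt) : bool := v.1 + v.2 == i + c.
Definition dminus (c : int) (i : int) (v : pt) : bool := v.1 - v.2 == i + c.

Definition Hge (d : int -> pt -> bool) (i : int) (H : pt -> int) : Prop :=
  [/\ harmZ2 H,
      (forall k v, k < i -> d k v -> H v = 0) &
      (forall v, d i v -> H v = 1 \/ H v = -1)].

Definition Hle (d : int -> pt -> bool) (i : int) (H : pt -> int) : Prop :=
  [/\ harmZ2 H,
      (forall k v, i < k -> d k v -> H v = 0) &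
      (forall v, d i v -> H v = 1 \/ H v = -1)].

Definition isBasis (N : nat) (I : finType) (F : I -> pt -> int) : Prop :=
  [/\ (forall j, harmGammaZ N (F j)),
      (forall c : I -> int,
          (forall v, inGamma N v -> \sum_j c j * F j v = 0) -> forall j, c j = 0) &
      (forall f, harmGammaZ N f ->
          exists c : I -> int, forall v, inGamma N v -> f v = \sum_j c j * F j v)].

Definition fam4 (T : Type) (A B C D : pt -> int) (F : T -> pt -> int)
  (x : 'I_4 + T) : pt -> int :=
  match x with
  | inl k => nth A [:: A; B; C; D] k
  | inr t => F t
  end.

From mathcomp Require Import all_boot all_order all_algebra.
From mathcomp Require Import zify ring.
Set Implicit Arguments. Unset Strict Implicit.
Import Order.TTheory GRing.Theory Num.Theory.
Local Open Scope ring_scope.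

(** Give each member H of the family a pivot point of Gamma_N on the diagonal
    where H is +-1, and order the members so that H vanishes at the pivots of
    all members of lower or equal rank: the pivots of H^-_{>=i} and H^-_{<=-i}
    fill the two central antidiagonals x + y = N - 1, N (together with the
    centre, the pivot of H^+_{>=0} or H^+_{>=1}), while those of H^+_{>=i} and
    H^+_{<=-i} are the corners (N-1, i) and (0, N-1-i), ranked last.  The
    evaluation matrix at the pivots is then unitriangular, which gives freeness
    and lets any element of the module be matched at the pivots by a
    combination of the family.  Their difference vanishes at every pivot and
    is harmonic in the interior, hence zero: it vanishes on the central antidiagonals, and harmonicity at a point
    of antidiagonal s - 1 relates two neighbouring values on antidiagonal s
    once antidiagonals s - 1 and s - 2 are known to vanish, so the corner
    pivot propagates zero along antidiagonal s, outwards in both directions. *)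

Section Unitriangular.

Variables (R : unitRingType) (I : finType) (T : Type).
Variables (F : I -> T -> R) (p : I -> T) (r : I -> nat).
Hypothesis pivot_unit : forall j, F j (p j) \is a GRing.unit.
Hypothesis triangular : forall j k, j != k -> (r k <= r j)%N -> F j (p k) = 0.

Lemma unitriangular_free (c : I -> R) :
  (forall k, \sum_j c j * F j (p k) = 0) -> forall j, c j = 0.
Proof.
move=> hc j; elim: (r j).+1 {-2}j (ltnSn (r j)) => // n IH {}j ltjn.
have := hc j; rewrite (bigD1 j) //= big1 ?addr0 => [cj0|k kj].
  by apply: (mulIr (pivot_unit j)); rewrite cj0 mul0r.
have [ltkj | lejk] := ltnP (r k) (r j); first by rewrite IH ?mul0r // (leq_trans ltkj).
by rewrite triangular ?mulr0.
Qed.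

Lemma unitriangular_interpolation (f : T -> R) :
  exists c : I -> R, forall k, f (p k) = \sum_j c j * F j (p k).
Proof.
suff [c hc] : exists c : I -> R,
    forall k, (r k < (\max_j r j).+1)%N -> f (p k) = \sum_j c j * F j (p k).
  by exists c => k; apply: hc; rewrite ltnS (leq_bigmax k).
elim: (\max_j r j).+1 => [|t [c hc]]; first by exists (fun=> 0).
pose g k := f (p k) - \sum_j c j * F j (p k).
pose d j := if r j == t then g j / F j (p j) else 0.
exists (fun j => c j + d j) => k ltkt.
have dk : \sum_j d j * F j (p k) = if r k == t then g k else 0.
  rewrite (bigD1 k) //= big1 ?addr0 => [|j jk]; last first.
    rewrite /d; case: eqP => [rjt|_]; last by rewrite mul0r.
    by rewrite (triangular jk) ?mulr0 // rjt -ltnS.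
  by rewrite /d; case: eqP => _; rewrite ?divrK ?mul0r.
under eq_bigr do rewrite mulrDl.
rewrite big_split /= dk; case: eqP => [_ | /eqP rkt]; first by rewrite /g addrC subrK.
by rewrite addr0 hc // ltn_neqAle rkt -ltnS.
Qed.

End Unitriangular.

Lemma lapGamma_lincomb N (I : finType) (c : I -> int) (f : pt -> int) (F : I -> pt -> int) v :
  lapGamma N (fun w => f w - \sum_j c j * F j w) v =
  lapGamma N f v - \sum_j c j * lapGamma N (F j) v.
Proof.
rewrite /lapGamma big_split /= sumrN exchange_big /=.
under [X in _ = _ - X]eq_bigr do rewrite mulrBr mulr_sumr mulrCA.
rewrite big_split /= sumrN -mulr_sumr; ring.
Qed.

Lemma harmGammaZ_lincomb N (I : finType) (c : I -> int) (f : pt -> int) (F : I -> pt -> int) :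
  harmGammaZ N f -> (forall j, harmGammaZ N (F j)) ->
  harmGammaZ N (fun w => f w - \sum_j c j * F j w).
Proof.
move=> hf hF v vG nb; rewrite lapGamma_lincomb hf // big1 ?subr0 // => j _.
by rewrite hF ?mulr0.
Qed.

Lemma isBasis_unitriangular N (I : finType) (F : I -> pt -> int) (p : I -> pt) (r : I -> nat) :
  (forall j, harmGammaZ N (F j)) -> (forall j, inGamma N (p j)) ->
  (forall j, F j (p j) \is a GRing.unit) ->
  (forall j k, j != k -> (r k <= r j)%N -> F j (p k) = 0) ->
  (forall g, harmGammaZ N g -> (forall k, g (p k) = 0) -> forall v, inGamma N v -> g v = 0) ->
  isBasis N F.
Proof.
move=> hF hp unitF triF unique; split=> // [c hc | f hf].
  by apply: (unitriangular_free unitF triF) => k; apply: hc.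
have [c hc] := unitriangular_interpolation unitF triF f.
exists c => v vG; apply/eqP; rewrite -subr_eq0; apply/eqP.
apply: (unique (fun w => f w - \sum_j c j * F j w)) => // [|k]; last by rewrite hc subrr.
exact: harmGammaZ_lincomb.
Qed.

Lemma lapGamma_all_inGamma N f v :
  all (inGamma N) (nbrs v) -> lapGamma N f v = \sum_(w <- nbrs v) f w - 4 * f v.
Proof. by move=> /all_filterP nbG; rewrite /lapGamma -big_filter nbG. Qed.

Lemma nbrs_inGamma N v : inGamma N v -> ~~ boundary N v -> all (inGamma N) (nbrs v).
Proof. by move=> vG; rewrite /boundary vG (has_predC (inGamma N)) negbK. Qed.

Lemma harmZ2_harmGammaZ N H : harmZ2 H -> harmGammaZ N H.
Proof. by move=> hH v vG nb; rewrite lapGamma_all_inGamma ?nbrs_inGamma // -hH subrr. Qed.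

Definition harm_interior (N : nat) (g : pt -> int) : Prop :=
  forall x y : int, 1 <= x <= N%:Z - 2 -> 1 <= y <= N%:Z - 2 ->
    g (x + 1, y) + g (x - 1, y) + g (x, y + 1) + g (x, y - 1) = 4 * g (x, y).

Lemma harmGammaZ_interior N g : harmGammaZ N g -> harm_interior N g.
Proof.
move=> hg x y hx hy.
have vG : inGamma N (x, y) by rewrite /inGamma /=; lia.
have nbG : all (inGamma N) (nbrs (x, y)) by rewrite /= /inGamma /=; lia.
have := hg _ vG; rewrite /boundary vG (has_predC (inGamma N)) nbG lapGamma_all_inGamma //.
by rewrite !big_cons big_nil addr0 !addrA => /(_ isT) /eqP; rewrite subr_eq0 => /eqP.
Qed.

Definition zero_on_diag (N : nat) (g : pt -> int) (s : int) : Prop :=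
  forall x y : int, inGamma N (x, y) -> x + y = s -> g (x, y) = 0.

Lemma zero_on_diag_up N g (s : int) :
  harm_interior N g -> N%:Z <= s ->
  zero_on_diag N g (s - 1) -> zero_on_diag N g (s - 2) ->
  (inGamma N (N%:Z - 1, s - N%:Z + 1) -> g (N%:Z - 1, s - N%:Z + 1) = 0) ->
  zero_on_diag N g s.
Proof.
move=> hg Ns z1 z2 corner.
suff walk n : forall x y,
    inGamma N (x, y) -> x + y = s -> N%:Z - 1 - x = n%:Z -> g (x, y) = 0.
  move=> x y xyG xys; apply: (walk (absz (N%:Z - 1 - x)%R)) => //.
  by move: xyG; rewrite /inGamma /=; lia.
elim: n => [|n IH] x y xyG xys hn.
  have E : (x, y) = (N%:Z - 1, s - N%:Z + 1) by congr pair; lia.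
  by rewrite E; apply: corner; rewrite -E.
have xy := xyG; rewrite /inGamma /= in xy.
have step := hg x (y - 1) ltac:(lia) ltac:(lia).
rewrite subrK (IH (x + 1) (y - 1)) ?(z2 (x - 1) (y - 1)) ?(z2 x (y - 1 - 1))
  ?(z1 x (y - 1)) in step; first by move: step; rewrite !(add0r, addr0) mulr0.
all: rewrite /inGamma /=; lia.
Qed.

Lemma zero_on_diag_down N g (s : int) :
  harm_interior N g -> s <= N%:Z - 2 ->
  zero_on_diag N g (s + 1) -> zero_on_diag N g (s + 2) ->
  (inGamma N (0, s) -> g (0, s) = 0) ->
  zero_on_diag N g s.
Proof.
move=> hg sN z1 z2 corner.
suff walk n : forall x y, inGamma N (x, y) -> x + y = s -> x = n%:Z -> g (x, y) = 0.
  move=> x y xyG xys; apply: (walk (absz x)) => //.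
  by move: xyG; rewrite /inGamma /=; lia.
elim: n => [|n IH] x y xyG xys hn.
  have E : (x, y) = (0, s) by congr pair; lia.
  by rewrite E; apply: corner; rewrite -E.
have xy := xyG; rewrite /inGamma /= in xy.
have step := hg x (y + 1) ltac:(lia) ltac:(lia).
rewrite addrK (IH (x - 1) (y + 1)) ?(z2 (x + 1) (y + 1)) ?(z2 x (y + 1 + 1))
  ?(z1 x (y + 1)) in step; first by move: step; rewrite !(add0r, addr0) mulr0.
all: rewrite /inGamma /=; lia.
Qed.

(* The label (true, b, i) stands for H^+_{>=i} (b = true) or H^+_{<=-i}
   (b = false), and (false, b, i) likewise for H^-, as in the indexing of the
   families of the theorem. *)
Definition Hdiag (N : nat) (l : bool * bool * nat) (H : pt -> int) : Prop :=
  match l with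
  | (true, true, i) => Hge (dplus (N%:Z - 1)) i%:Z H
  | (true, false, i) => Hle (dplus (N%:Z - 1)) (- i%:Z) H
  | (false, true, i) => Hge (dminus 0) i%:Z H
  | (false, false, i) => Hle (dminus 0) (- i%:Z) H
  end.

Lemma Hdiag_of_and4 N (F : bool * bool -> pt -> int) (i : nat) :
  let dP := dplus (N%:Z - 1) in let dM := dminus 0 in
  [/\ Hge dP i%:Z (F (true, true)), Hle dP (- i%:Z) (F (true, false)),
      Hge dM i%:Z (F (false, true)) & Hle dM (- i%:Z) (F (false, false))] ->
  forall k, Hdiag N (k, i) (F k).
Proof. by move=> dP dM [? ? ? ?] [[] []]. Qed.

(* With h := height N k v, the point v lies on d^+_h, d^+_{-h}, d^-_h or d^-_{-h}
   according as k is (true, true), (true, false), (false, true) or (false, false). *)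
Definition height (N : nat) (k : bool * bool) (v : pt) : int :=
  match k with
  | (true, true) => v.1 + v.2 - (N%:Z - 1)
  | (true, false) => N%:Z - 1 - (v.1 + v.2)
  | (false, true) => v.1 - v.2
  | (false, false) => v.2 - v.1
  end.

Lemma Hdiag_harmZ2 N l H : Hdiag N l H -> harmZ2 H.
Proof. by case: l => [[[] []] i] []. Qed.

Lemma Hdiag_below N l H v : Hdiag N l H -> height N l.1 v < l.2%:Z -> H v = 0.
Proof.
case: l => [[[] []] i] [_ vanish _] /= hv.
- by apply: (vanish (v.1 + v.2 - (N%:Z - 1))); rewrite /dplus; lia.
- by apply: (vanish (v.1 + v.2 - (N%:Z - 1))); rewrite /dplus; lia.
- by apply: (vanish (v.1 - v.2)); rewrite /dminus; lia.
- by apply: (vanish (v.1 - v.2)); rewrite /dminus; lia.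
Qed.

Lemma Hdiag_level N l H v :
  Hdiag N l H -> height N l.1 v = l.2%:Z -> H v = 1 \/ H v = -1.
Proof.
by case: l => [[[] []] i] [_ _ level] /= hv; apply: level; rewrite /dplus /dminus; lia.
Qed.

(* The index ~~ odd N of H^+_{>= ~~ odd N} is the one whose diagonal passes
   through the centre of Gamma_N. *)
Definition valid_label (N : nat) (l : bool * bool * nat) : bool :=
  match l with
  | (true, true, i) => (i < N)%N && ((i == ~~ odd N :> nat) || (1 < i)%N)
  | (_, _, i) => (0 < i < N)%N
  end.

Definition pivot (N : nat) (l : bool * bool * nat) : pt :=
  match l with
  | (true, true, i) =>
      if (i <= 1)%N then ((N %/ 2)%:Z, (N %/ 2)%:Z) else (N%:Z - 1, i%:Z)
  | (true, false, i) => (0, N%:Z - 1 - i%:Z)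
  | (false, true, i) => (((N + i) %/ 2)%:Z, ((N + i) %/ 2)%:Z - i%:Z)
  | (false, false, i) => (((N + i) %/ 2)%:Z - i%:Z, ((N + i) %/ 2)%:Z)
  end.

Definition rank (N : nat) (l : bool * bool * nat) : nat :=
  match l with
  | (true, true, i) => if (i <= 1)%N then 0 else N + i
  | (true, false, i) => N + i
  | (false, _, i) => i
  end.

Lemma pivot_inGamma N l : valid_label N l -> inGamma N (pivot N l).
Proof. by case: l => [[[] []] i] /=; rewrite /inGamma; try case: ifP; rewrite /=; lia. Qed.

Lemma height_pivot N l : valid_label N l -> height N l.1 (pivot N l) = l.2%:Z.
Proof. by case: l => [[[] []] i] /=; try case: ifP; rewrite /=; lia. Qed.

Lemma height_pivot_lt N l l' :
  valid_label N l -> valid_label N l' -> l' != l -> (rank N l' <= rank N l)%N ->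
  height N l.1 (pivot N l') < l.2%:Z.
Proof.
case: l l' => [[[] []] i] [[[] []] j]; rewrite /= ?xpair_eqE /=;
  try case: ifP; try case: ifP; rewrite /=; lia.
Qed.

Lemma zero_of_pivots N g :
  harm_interior N g -> (forall l, valid_label N l -> g (pivot N l) = 0) ->
  forall v, inGamma N v -> g v = 0.
Proof.
move=> hg hz.
have band (s : int) : N%:Z - 1 <= s <= N%:Z -> zero_on_diag N g s.
  move=> hs x y xyG xys; have xy := xyG; rewrite /inGamma /= in xy.
  have [ltxy | ltyx | eqxy] := ltgtP x y.
  - rewrite (_ : (x, y) = pivot N (false, false, absz (y - x)%R)) ?hz //=; first lia.
    by congr pair; lia.
  - rewrite (_ : (x, y) = pivot N (false, true, absz (x - y)%R)) ?hz //=; first lia.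
    by congr pair; lia.
  - rewrite (_ : (x, y) = pivot N (true, true, nat_of_bool (~~ odd N))) ?hz //=; first lia.
    by rewrite leq_b1; congr pair; lia.
have grow k (s : int) : N%:Z - 1 - k%:Z <= s <= N%:Z + k%:Z -> zero_on_diag N g s.
  elim: k s => [|k IH] s hs; first by apply: band; lia.
  have [hi | le] := ltrP (N%:Z + k%:Z) s.
    apply: zero_on_diag_up => //; try (apply: IH; lia); first lia.
    rewrite /inGamma /= => cG.
    by rewrite (_ : (_, _) = pivot N (true, true, k.+2)) ?hz //=; try congr pair; lia.
  have [lo | ge] := ltrP s (N%:Z - 1 - k%:Z); last by apply: IH; lia.
  apply: zero_on_diag_down => //; try (apply: IH; lia); first lia.
  rewrite /inGamma /= => cG.
  by rewrite (_ : (_, _) = pivot N (true, false, k.+1)) ?hz //=; try congr pair; lia.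
move=> [x y] xyG; apply: (grow N (x + y)) => //.
by move: xyG; rewrite /inGamma /=; lia.
Qed.

Lemma isBasis_labelled N (I : finType) (F : I -> pt -> int) (lab : I -> bool * bool * nat) :
  injective lab -> (forall j, valid_label N (lab j)) ->
  (forall l, valid_label N l -> exists j, lab j = l) ->
  (forall j, Hdiag N (lab j) (F j)) -> isBasis N F.
Proof.
move=> lab_inj lab_valid lab_onto hF.
apply: (@isBasis_unitriangular N I F (fun j => pivot N (lab j)) (fun j => rank N (lab j))).
- by move=> j; apply/harmZ2_harmGammaZ/(Hdiag_harmZ2 (hF j)).
- by move=> j; apply: pivot_inGamma.
- move=> j; have [->|->] := Hdiag_level (hF j) (height_pivot (lab_valid j)).
    exact: unitr1.
  by rewrite unitrN unitr1.
- move=> j j' neq le; apply: (Hdiag_below (hF j)).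
  by apply: height_pivot_lt => //; rewrite (inj_eq lab_inj) eq_sym.
- move=> g hg hzero; apply: zero_of_pivots (harmGammaZ_interior hg) _ => l /lab_onto [j <-].
  exact: hzero.
Qed.

Lemma isBasis_one (H : pt -> int) :
  Hdiag 1 (true, true, 0%N) H -> isBasis 1 (fun _ : 'I_1 => H).
Proof.
move=> hH; apply: (@isBasis_labelled 1 _ _ (fun=> (true, true, 0%N))) => //.
- by move=> j k _; rewrite !ord1.
- by case=> [[[] []] [|[|i]]] //= _; exists ord0.
Qed.

Lemma isBasis_even N (F : bool * bool * 'I_(N - 1) -> pt -> int) :
  ~~ odd N ->
  (forall j : 'I_(N - 1), forall k, Hdiag N (k, j.+1) (F (k, j))) ->
  isBasis N F.
Proof.
move=> evenN hF; apply: (@isBasis_labelled N _ F (fun x => (x.1, x.2.+1))) => //.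
- by move=> [k j] [k' j'] [-> /val_inj ->].
- by move=> [[[] []] j] /=; rewrite ?(negPf evenN); have := ltn_ord j; lia.
- move=> [k [|i]] vi.
    by case: k vi => [[] []] /=; rewrite ?(negPf evenN) ?andbF.
  have lt_i : (i < N - 1)%N by case: k vi => [[] []] /=; lia.
  by exists (k, Ordinal lt_i).
- by move=> [k j]; apply: hF.
Qed.

Lemma isBasis_odd N (A B C D : pt -> int) (F : bool * bool * 'I_(N - 2) -> pt -> int) :
  odd N -> (3 <= N)%N ->
  Hdiag N (true, true, 0%N) A -> Hdiag N (true, false, 1%N) B ->
  Hdiag N (false, true, 1%N) C -> Hdiag N (false, false, 1%N) D ->
  (forall j : 'I_(N - 2), forall k, Hdiag N (k, j.+2) (F (k, j))) ->
  isBasis N (fam4 A B C D F).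
Proof.
move=> oddN N3 hA hB hC hD hF.
pose low := [:: (true, true, 0%N); (true, false, 1%N); (false, true, 1%N); (false, false, 1%N)].
pose lab (x : 'I_4 + bool * bool * 'I_(N - 2)) :=
  match x with inl k => nth (true, true, 0%N) low k | inr (k, j) => (k, j.+2) end.
apply: (@isBasis_labelled N _ (fam4 A B C D F) lab).
- move=> [k|[k j]] [k'|[k' j']] //=.
  + by move/eqP; rewrite nth_uniq // => /eqP/val_inj ->.
  + by case: k => [[|[|[|[|//]]]] ?] /= [].
  + by case: k' => [[|[|[|[|//]]]] ?] /= [].
  + by case=> -> /val_inj ->.
- move=> [k|[k j]] /=; last by case: k => [[] []] /=; rewrite ?oddN; have := ltn_ord j; lia.
  by case: k => [[|[|[|[|]]]] ?] //=; rewrite ?oddN; lia.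
- move=> [k i] vi; have [le_i1 | lt_1i] := leqP i 1.
    have low_ki : (k, i) \in low.
      by move: vi le_i1; case: k => [[] []]; case: i => [|[|i]] //=; rewrite oddN ?andbF.
    have idx : (index (k, i) low < 4)%N by rewrite index_mem.
    by exists (inl (Ordinal idx)); apply: nth_index.
  have lt_i : (i - 2 < N - 2)%N by case: k vi => [[] []] /=; lia.
  by exists (inr (k, Ordinal lt_i)); rewrite /= -addn2 subnK.
- move=> [k|[k j]] /=; last exact: hF.
  by case: k => [[|[|[|[|]]]] ?].
Qed.

Theorem corollary7 (N : nat) (HN : (1 <= N)%N) :
  let dP := dplus (N%:Z - 1) in
  let dM := dminus 0 in
  (* (i) *)
  [/\ (N = 1%N -> forall H, Hge dP 0 H -> isBasis N (fun _ : 'I_1 => H)),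
  (* (ii) *)
      (~~ odd N -> forall F : bool * bool * 'I_(N - 1) -> pt -> int,
          (forall j : 'I_(N - 1),
             let i := (j.+1)%:Z in
             [/\ Hge dP i (F (true, true, j)), Hle dP (- i) (F (true, false, j)),
                 Hge dM i (F (false, true, j)) & Hle dM (- i) (F (false, false, j))]) ->
          isBasis N F) &
  (* (iii) *)
      (odd N -> (3 <= N)%N ->
        forall (A B C D : pt -> int) (F : bool * bool * 'I_(N - 2) -> pt -> int),
          Hge dP 0 A -> Hle dP (-1) B -> Hge dM 1 C -> Hle dM (-1) D ->
          (forall j : 'I_(N - 2),
             let i := (j.+2)%:Z in
             [/\ Hge dP i (F (true, true, j)), Hle dP (- i) (F (true, false, j)),
                 Hge dM i (F (false, true, j)) & Hle dM (- i) (F (false, false, j))]) ->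
          isBasis N (fam4 A B C D F))].
Proof.
move=> dP dM; split.
- by move=> N1 H hH; subst N; exact: isBasis_one.
- move=> evenN F hF; apply: isBasis_even evenN _ => j.
  exact: (Hdiag_of_and4 (F := fun k => F (k, j)) (hF j)).
- move=> oddN N3 A B C D F hA hB hC hD hF; apply: isBasis_odd => // j.
  exact: (Hdiag_of_and4 (F := fun k => F (k, j)) (hF j)).
Qed.
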